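(* Let $n=2t$, and let $\varphi:\mathbb{F}_{2^t}\times\mathbb{F}_{2^t}\to\mathbb{F}_{2^n}$ be an $\mathbb{F}_2$-linear bijection. Let $Q(x)=\sum_{i=1}^{t-1}Tr_1^n(x^{2^i+1})+Tr_1^{t}(x^{2^{t}+1})$ on $\mathbb{F}_{2^n}$ and $\tilde Q=Q\circ\varphi$. Let $G(x,y)=Tr_1^t(xy)$ on $\mathbb{F}_{2^t}\times\mathbb{F}_{2^t}$, and suppose $\alpha_1,\alpha_2,\alpha_3,\alpha_4,\beta,\gamma\in\mathbb{F}_{2^t}$ and $c\in\mathbb{F}_2$ satisfy $\tilde Q(x,y)=G(\alpha_1x+\alpha_2,\alpha_3y+\alpha_4)+Tr_1^t(\beta x)+Tr_1^t(\gamma y)+c$ for all $x,y$. Let $\pi$ be a complete mapping polynomial over $\mathbb{F}_{2^t}$, $h$ any polynomial over $\mathbb{F}_{2^t}$, and $f(x,y)=Tr_1^t(x\pi(y))+Tr_1^t(h(y))$. Then $$F(x,y)=f(\alpha_1x+\alpha_2,\alpha_3y+\alpha_4)+G(\alpha_1x+\alpha_2,\alpha_3y+\alpha_4)+Tr_1^t(\beta x)+Tr_1^t(\gamma y)+c$$ is bent-negabent, in the sense that $F\circ\varphi^{-1}:\mathbb{F}_{2^n}\to\mathbb{F}_2$ is bent-negabent.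
   Context: $Tr_1^m(z)=z+z^2+\dots+z^{2^{m-1}}$; $Tr=Tr_1^n$. A polynomial $\pi$ over $\mathbb{F}_{2^t}$ is a complete mapping polynomial if both $\pi(y)$ and $\pi(y)+y$ are permutations of $\mathbb{F}_{2^t}$. Fix a self-dual basis $\{\alpha_i'\}$ of $\mathbb{F}_{2^n}$ over $\mathbb{F}_2$ ($Tr(\alpha_i'\alpha_j')=\delta_{ij}$), identify $\mathbb{F}_{2^n}$ with $\mathbb{F}_2^n$ via coordinates, and let $wt(x)$ be the number of nonzero coordinates. For $g:\mathbb{F}_{2^n}\to\mathbb{F}_2$: $g$ is bent if $\left|\sum_x(-1)^{g(x)+Tr(\mu x)}\right|=2^{n/2}$ for all $\mu$; negabent if $\left|\sum_x(-1)^{g(x)+Tr(\mu x)}\mathrm{i}^{wt(x)}\right|=2^{n/2}$ for all $\mu$ ($\mathrm{i}=\sqrt{-1}$); bent-negabent if both. *)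

From HB Require Import structures.
From mathcomp Require Import all_boot all_order all_algebra all_field.
Set Implicit Arguments. Unset Strict Implicit. Unset Printing Implicit Defensive.
Import Order.TTheory GRing.Theory Num.Theory.
Local Open Scope ring_scope.

Definition trace_fld (F : fieldType) (m : nat) (z : F) : F :=
  \sum_(i < m) z ^+ (2 ^ i).

(* Boolean (F_2-valued) version: F_2 = {false, true}, 1 <-> true.
   Where applied, the trace lies in the prime field {0,1}. *)
Definition tr (F : fieldType) (m : nat) (z : F) : bool := trace_fld m z == 1.

Definition Qfun (L : fieldType) (t : nat) (x : L) : bool :=
  (\big[addb/false]_(1 <= i < t) tr (2 * t) (x ^+ (2 ^ i + 1)))
  (+) tr t (x ^+ (2 ^ t + 1)).

Definition Gfun (K : fieldType) (t : nat) (x y : K) : bool := tr t (x * y).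

Definition complete_mapping (K : fieldType) (p : {poly K}) : Prop :=
  injective (fun y => p.[y]) /\ injective (fun y => p.[y] + y).

Definition self_dual (L : fieldType) (n : nat) (a : 'I_n -> L) : Prop :=
  forall i j, trace_fld n (a i * a j) = (i == j)%:R.

(* Coordinates w.r.t. a self-dual basis a: x = sum_i Tr(a_i x) a_i,
   so wt x = #{ i | Tr(a_i x) = 1 }. *)
Definition wt (L : fieldType) (n : nat) (a : 'I_n -> L) (x : L) : nat :=
  #|[set i : 'I_n | tr n (a i * x)]|.

Definition sgn (b : bool) : algC := (-1) ^+ b.

Definition bent (L : finFieldType) (n : nat) (g : L -> bool) : Prop :=
  forall mu : L,
    `| \sum_(x : L) sgn (g x (+) tr n (mu * x)) | = 2 ^+ (n %/ 2).

Definition negabent (L : finFieldType) (n : nat) (a : 'I_n -> L)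
    (g : L -> bool) : Prop :=
  forall mu : L,
    `| \sum_(x : L) sgn (g x (+) tr n (mu * x)) * 'i ^+ (wt a x) |
      = 2 ^+ (n %/ 2).

Definition bent_negabent (L : finFieldType) (n : nat) (a : 'I_n -> L)
    (g : L -> bool) : Prop := bent n g /\ negabent a g.

From HB Require Import structures.
From mathcomp Require Import all_boot all_order all_algebra all_field.
From mathcomp Require Import zify ring.
Import Order.TTheory GRing.Theory Num.Theory.
Local Open Scope ring_scope.
Set Implicit Arguments. Unset Strict Implicit.

(* With [v = a3 y + a4], both [g o phi] and [(g + Q) o phi] are
   Maiorana-McFarland functions [tr (x sigma(y)) + l(x) + k(y)], with
   [sigma y = a1 (pi v + v)] and [sigma y = a1 pi v] respectively.  These are
   injective because [pi] is a complete mapping and [a1 a3 <> 0]: otherwise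
   [Q] would be additive, which its polar form [tr p tr q + tr (p q)] forbids.
   Every Walsh coefficient of a Maiorana-McFarland function is [+-2^t], which
   gives bentness of [g].  For negabentness, in a self-dual basis the map
   [x |-> i^wt(x) (-1)^Q(x) (-i)^Tr(x)] is a character of [(L, +)], so
   [i^wt(x) = (-1)^(e(x) + Q(x)) i^Tr(x)] for a linear [e]; expanding
   [i^b = (1 + i)/2 + (1 - i)/2 (-1)^b] turns each nega-Walsh coefficient of
   [g] into [(1 + i)/2 W + (1 - i)/2 W'] with [W, W'] Walsh coefficients of
   [g + Q], both [+-2^t], and that has modulus [2^t]. *)

Lemma natr_bool_inj (R : nzSemiRingType) (b1 b2 : bool) : (b1%:R : R) = b2%:R -> b1 = b2.
Proof. by case: b1; case: b2 => // /eqP; rewrite ?oner_eq0 // eq_sym oner_eq0. Qed.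

Section CharTwo.
Variable F : fieldType.
Hypothesis chF : 2 \in [pchar F].

Lemma exprD_pchar2 i (x y : F) : (x + y) ^+ (2 ^ i) = x ^+ (2 ^ i) + y ^+ (2 ^ i).
Proof. by rewrite exprDn_pchar // pnatX (pnatE _ (isT : prime 2)) chF. Qed.

Lemma natr_addb (a b : bool) : ((a (+) b)%:R : F) = a%:R + b%:R.
Proof. by case: a; case: b; rewrite /= ?addr0 ?add0r ?addrr_pchar2. Qed.

Lemma natr_odd n : (n%:R : F) = (odd n)%:R.
Proof. by elim: n => // n IH; rewrite -addn1 natrD IH oddD addbT -addbT natr_addb. Qed.

Variable m : nat.
Local Notation T := (@trace_fld F m).

Lemma trace_fldD (x y : F) : T (x + y) = T x + T y.
Proof. by rewrite /trace_fld -big_split; apply: eq_bigr => i _; rewrite exprD_pchar2. Qed.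

Lemma trace_fld0 : T 0 = 0.
Proof. by rewrite /trace_fld big1 // => i _; rewrite expr0n expn_eq0. Qed.

Lemma trace_fld_sum (I : Type) (r : seq I) (P : pred I) (G : I -> F) :
  T (\sum_(i <- r | P i) G i) = \sum_(i <- r | P i) T (G i).
Proof. exact: (big_morph T trace_fldD trace_fld0). Qed.

Lemma trace_fldZ (c z : F) : c ^+ 2 = c -> T (c * z) = c * T z.
Proof.
move=> c2; rewrite /trace_fld mulr_sumr; apply: eq_bigr => i _.
rewrite exprMn; congr (_ * _).
by elim: (nat_of_ord i) => // j IH; rewrite expnSr exprM IH.
Qed.

Lemma trace_fld_sqr (z : F) : z ^+ (2 ^ m) = z -> T (z ^+ 2) = T z.
Proof.
rewrite /trace_fld; case: m => [|k] zk; first by rewrite !big_ord0.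
rewrite big_ord_recr big_ord_recl /= -exprM -expnS zk expr1 addrC.
by congr (_ + _); apply: eq_bigr => i _; rewrite -exprM -expnS.
Qed.

Lemma trace_fld_frob (z : F) j : z ^+ (2 ^ m) = z -> T (z ^+ (2 ^ j)) = T z.
Proof.
move=> zm; elim: j => [|j IH]; first by rewrite expr1.
rewrite expnSr exprM -[in RHS]IH; apply: trace_fld_sqr.
by rewrite -exprM mulnC exprM zm.
Qed.

Lemma trace_fld_bool (z : F) : z ^+ (2 ^ m) = z -> T z = (tr m z)%:R.
Proof.
move=> zm; rewrite /tr; case: eqP => [->//|/eqP Tz1] /=; apply/eqP.
have Tz2 : T z ^+ 2 = T z.
  rewrite -[RHS](trace_fld_sqr zm) /trace_fld -(pFrobenius_autE chF) rmorph_sum.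
  by apply: eq_bigr => i _; rewrite -[LHS]/(z ^+ (2 ^ i) ^+ 2) -!exprM mulnC.
have : T z * (T z - 1) = 0 by rewrite mulrBr mulr1 -expr2 Tz2 subrr.
by move/eqP; rewrite mulf_eq0 subr_eq0 (negPf Tz1) orbF.
Qed.

Lemma tr_addb (x y : F) : x ^+ (2 ^ m) = x -> y ^+ (2 ^ m) = y ->
  tr m (x + y) = tr m x (+) tr m y.
Proof.
move=> x_fixed y_fixed; apply: (@natr_bool_inj F).
by rewrite natr_addb -!trace_fld_bool ?exprD_pchar2 ?x_fixed ?y_fixed ?trace_fldD.
Qed.

End CharTwo.

Lemma size_trace_poly (R : nzRingType) k :
  size (\sum_(i < k.+1) 'X^(2 ^ i) : {poly R}) = (2 ^ k).+1.
Proof.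
rewrite big_ord_recr /= addrC size_polyDl size_polyXn // ltnS.
apply: leq_trans (size_sum _ _ _) _; apply/bigmax_leqP => i _.
by rewrite size_polyXn ltn_exp2l.
Qed.

Section FiniteCharTwo.
Variables (F : finFieldType) (m : nat).
Hypothesis cardF : #|F| = (2 ^ m)%N.

Lemma pchar2_card : 2 \in [pchar F].
Proof. exact: card_finPcharP cardF isT. Qed.

Lemma expr_card2 (z : F) : z ^+ (2 ^ m) = z.
Proof. by rewrite -cardF expf_card. Qed.

Lemma card2_exp_gt0 : (0 < m)%N.
Proof. by case: m cardF => // /eqP; rewrite gtn_eqF ?finNzRing_gt1. Qed.

Lemma tr_card2_addb (x y : F) : tr m (x + y) = tr m x (+) tr m y.
Proof. exact: tr_addb pchar2_card _ _ _ (expr_card2 x) (expr_card2 y). Qed.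

Lemma tr_card2_0 : tr m (0 : F) = false.
Proof. by have := tr_card2_addb 0 0; rewrite addr0; case: (tr m 0). Qed.

Lemma exists_tr_card2 : exists z : F, tr m z.
Proof.
case: (pickP (fun z : F => tr m z)) => [z trz|trF]; first by exists z.
have [k mk] : exists k, m = k.+1 by case: m card2_exp_gt0 => // k _; exists k.
pose p : {poly F} := \sum_(i < m) 'X^(2 ^ i).
have size_p : size p = (2 ^ k).+1 by rewrite /p mk size_trace_poly.
have p_neq0 : p != 0 by rewrite -size_poly_gt0 size_p.
have roots_p : all (root p) (enum F).
  apply/allP => z _; rewrite /root horner_sum.
  rewrite -[X in X == 0](_ : trace_fld m z = _); last first.
    by apply: eq_bigr => i _; rewrite hornerXn.
  by rewrite (trace_fld_bool pchar2_card (expr_card2 z)) trF.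
have := max_poly_roots p_neq0 roots_p (enum_uniq F).
by rewrite -cardE cardF size_p mk expnS; have := expn_gt0 2 k; lia.
Qed.

End FiniteCharTwo.

Lemma sgn_addb a b : sgn (a (+) b) = sgn a * sgn b.
Proof. exact: signr_addb. Qed.

Lemma sgnK b : sgn b * sgn b = 1.
Proof. by rewrite -sgn_addb addbb. Qed.

Definition xor_additive (V : zmodType) (l : V -> bool) :=
  forall x y, l (x + y) = l x (+) l y.

Lemma xor_additive0 (V : zmodType) (l : V -> bool) : xor_additive l -> l 0 = false.
Proof. by move=> l_add; have := l_add 0 0; rewrite addr0; case: (l 0). Qed.

Lemma sum_sgn_xor_additive (V : finZmodType) (l : V -> bool) x0 :
  xor_additive l -> l x0 -> \sum_x sgn (l x) = 0.
Proof.
move=> l_add lx0; set S := \sum_x _.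
have SN : S = - S.
  rewrite {1}/S (reindex_inj (addIr x0)) /= -sumrN; apply: eq_bigr => x _.
  by rewrite l_add lx0 addbT /sgn signrN.
have : S *+ 2 == 0 by rewrite mulr2n {1}SN addNr.
by rewrite mulrn_eq0 => /eqP.
Qed.

Section TraceDuality.
Variables (F : finFieldType) (m : nat).
Hypothesis cardF : #|F| = (2 ^ m)%N.
Local Notation tr := (@tr F m).

Lemma xor_additive_tr_mul (s : F) : xor_additive (fun x => tr (x * s)).
Proof. by move=> x y; rewrite mulrDl (tr_card2_addb cardF). Qed.

Lemma exists_tr_mul (s : F) : s != 0 -> exists x, tr (x * s).
Proof.
by move=> s_neq0; have [z trz] := exists_tr_card2 cardF; exists (z / s); rewrite mulfVK.
Qed.

Lemma tr_mul_inj (s1 s2 : F) : (forall x, tr (x * s1) = tr (x * s2)) -> s1 = s2.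
Proof.
move=> eq_tr; apply/eqP; rewrite -subr_eq0; apply/negP => /negP /exists_tr_mul [x].
by rewrite mulrBr (GRing.subr_pchar2 (pchar2_card cardF)) (tr_card2_addb cardF) eq_tr addbb.
Qed.

(* Orthogonality of characters: summing the sign of [tr (x s) (+) l x] over
   both [s] and [x] gives [#|F|] from [x = 0] alone, so some inner sum over [x]
   is nonzero, i.e. [l] coincides with [x |-> tr (x s)] for that [s]. *)
Lemma tr_dual (l : F -> bool) : xor_additive l -> exists s, forall x, tr (x * s) = l x.
Proof.
move=> l_add; case: (pickP (fun s => [forall x, tr (x * s) == l x])).
  by move=> s /forallP eq_s; exists s => x; apply: eqP (eq_s x).
move=> neq.
pose S := \sum_(s : F) \sum_(x : F) sgn (tr (x * s) (+) l x).
have S0 : S = 0.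
  rewrite /S big1 // => s _; have /negbT := neq s; rewrite negb_forall => /existsP [x lx].
  apply: (@sum_sgn_xor_additive _ _ x); last by move: lx; case: (tr _); case: (l x).
  by move=> y z; rewrite xor_additive_tr_mul l_add addbACA.
have ScardF : S = #|F|%:R.
  rewrite /S exchange_big (bigD1 0) //= [X in _ + X]big1 ?addr0 => [|x x_neq0].
    rewrite (eq_bigr (fun _ => 1)) ?sumr_const // => s _.
    by rewrite mul0r (tr_card2_0 cardF) xor_additive0.
  under eq_bigr do rewrite sgn_addb mulrC.
  rewrite -mulr_sumr; have [s trs] := exists_tr_mul x_neq0.
  rewrite (@sum_sgn_xor_additive _ _ s) ?mulr0 //; last by rewrite mulrC.
  by move=> y z; rewrite mulrDr (tr_card2_addb cardF).
by move/eqP: ScardF; rewrite S0 eq_sym pnatr_eq0 cardF expn_eq0.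
Qed.

(* Maiorana-McFarland: for fixed [y] the sum over [x] vanishes unless
   [sigma y] is the point [s] dual to [l], which happens for exactly one [y]. *)
Lemma maiorana_mcfarland_walsh (sigma : F -> F) (l : F -> bool) (k : F -> bool) :
  injective sigma -> xor_additive l ->
  exists b, \sum_(p : F * F) sgn (tr (p.1 * sigma p.2) (+) l p.1 (+) k p.2)
            = sgn b * #|F|%:R.
Proof.
move=> sigma_inj l_add; have [s ls] := tr_dual l_add.
have [sigmaV sigmaK sigmaVK] := injF_bij sigma_inj.
exists (k (sigmaV s)).
rewrite -(pair_bigA _ (fun x y => sgn (tr (x * sigma y) (+) l x (+) k y))) /=.
rewrite exchange_big (bigD1 (sigmaV s)) //= [X in _ + X]big1 ?addr0 => [|y y_neq].
  have -> : #|F|%:R = \sum_(x : F) 1 :> algC by rewrite sumr_const.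
  rewrite sigmaVK mulr_sumr.
  by apply: eq_bigr => x _; rewrite -ls addbb mulr1.
under eq_bigr do rewrite sgn_addb mulrC.
rewrite -mulr_sumr; case: (pickP (fun x => tr (x * sigma y) (+) l x)) => [x lx|lF].
  rewrite (@sum_sgn_xor_additive _ _ x) ?mulr0 //.
  by move=> u v; rewrite xor_additive_tr_mul l_add addbACA.
case/eqP: y_neq; rewrite -[y]sigmaK; congr sigmaV; apply: tr_mul_inj => x.
by rewrite ls; move: (lF x); case: (tr _); case: (l x).
Qed.

End TraceDuality.

Section SelfDualBasis.
Variables (L : finFieldType) (n : nat).
Hypothesis cardL : #|L| = (2 ^ n)%N.
Variable a : 'I_n -> L.
Hypothesis a_self_dual : self_dual a.
Local Notation T := (@trace_fld L n).
Let chL := pchar2_card cardL.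

Definition coord k (z : L) := tr n (a k * z).

Lemma coordD k x y : coord k (x + y) = coord k x (+) coord k y.
Proof. by rewrite /coord mulrDr (tr_card2_addb cardL). Qed.

Lemma trace_fld_bool_card2 (z : L) : T z = (tr n z)%:R.
Proof. exact: trace_fld_bool chL _ _ (expr_card2 cardL z). Qed.

Lemma trace_fld_natrM (b : bool) (z : L) : T (b%:R * z) = b%:R * T z.
Proof. by apply: trace_fldZ; case: b; rewrite ?expr0n ?expr1n. Qed.

Definition of_coord (b : {ffun 'I_n -> bool}) : L := \sum_k (b k)%:R * a k.

Lemma coord_of_coord b k : coord k (of_coord b) = b k.
Proof.
apply: (@natr_bool_inj L); rewrite /coord -trace_fld_bool_card2 mulr_sumr.
rewrite (trace_fld_sum chL) (bigD1 k) //= [X in _ + X]big1 => [|j jk].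
  by rewrite addr0 mulrCA trace_fld_natrM a_self_dual eqxx mulr1.
by rewrite mulrCA trace_fld_natrM a_self_dual eq_sym (negPf jk) mulr0.
Qed.

Lemma coord_expansion (z : L) : z = \sum_k (coord k z)%:R * a k.
Proof.
have of_coord_inj : injective of_coord.
  by move=> b1 b2 eq_b; apply/ffunP => k; rewrite -!(coord_of_coord _ k) eq_b.
have /codomP [b ->] : z \in codom of_coord.
  by apply: (inj_card_onto of_coord_inj); rewrite card_ffun card_bool card_ord cardL.
by apply: eq_bigr => k _; rewrite coord_of_coord.
Qed.

Lemma coord1 k : coord k 1.
Proof.
rewrite /coord mulr1 /tr -(trace_fld_sqr (expr_card2 cardL (a k))).
by rewrite expr2 a_self_dual eqxx.
Qed.

Lemma tr_mul_coord (p q : L) : tr n (p * q) = odd (\sum_k (coord k p && coord k q)).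
Proof.
apply: (@natr_bool_inj L); rewrite -trace_fld_bool_card2 -(natr_odd chL) natr_sum.
rewrite {1}(coord_expansion q) mulr_sumr (trace_fld_sum chL); apply: eq_bigr => k _.
rewrite mulrCA trace_fld_natrM trace_fld_bool_card2 mulrC [p * _]mulrC.
by rewrite -natrM mulnb.
Qed.

Lemma wtE (p : L) : wt a p = (\sum_k coord k p)%N.
Proof. by rewrite /wt -sum1_card big_mkcond /=; apply: eq_bigr => k _; rewrite inE. Qed.

Lemma tr_odd_wt (p : L) : tr n p = odd (wt a p).
Proof.
rewrite -[p]mulr1 tr_mul_coord wtE mulr1.
by congr odd; apply: eq_bigr => k _; rewrite coord1 andbT.
Qed.

Lemma wtD (p q : L) :
  (wt a (p + q) + 2 * \sum_k (coord k p && coord k q) = wt a p + wt a q)%N.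
Proof.
rewrite !wtE big_distrr /= -!big_split /=; apply: eq_bigr => k _.
by rewrite coordD; case: (coord k p); case: (coord k q).
Qed.

Lemma exprCi_wtD (p q : L) :
  'i ^+ wt a (p + q) = 'i ^+ wt a p * 'i ^+ wt a q * sgn (tr n (p * q)) :> algC.
Proof.
rewrite -exprD -wtD exprD exprM sqrCi tr_mul_coord /sgn signr_odd -mulrA.
by rewrite -exprD addnn -signr_odd odd_double mulr1.
Qed.

End SelfDualBasis.

Lemma sum_nat_fold_middle (V : nmodType) t (G : nat -> V) : (0 < t)%N ->
  \sum_(1 <= i < 2 * t) G i
    = \sum_(1 <= i < t) G i + G t + \sum_(1 <= i < t) G (2 * t - i)%N.
Proof.
move=> t_gt0; rewrite (@big_cat_nat _ _ _ t) ?leq_pmull //=.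
rewrite (@big_ltn _ _ _ t) ?ltn_Pmull //.
have -> : \sum_(t.+1 <= i < 2 * t) G i = \sum_(1 <= i < t) G (2 * t - i)%N.
  rewrite -[t.+1]add1n big_addn (_ : 2 * t - t = t)%N; last by lia.
  by rewrite big_nat_rev; apply: eq_big_nat => i /andP [_ i_lt]; congr G; lia.
by rewrite addrA.
Qed.

Section QuadraticForm.
Variables (L : finFieldType) (t : nat).
Local Notation n := (2 * t)%N.
Hypothesis cardL : #|L| = (2 ^ n)%N.
Local Notation T := (@trace_fld L n).
Local Notation T1 := (@trace_fld L t).
Let chL := pchar2_card cardL.
Let fixL := expr_card2 cardL.

Lemma card2_half_exp_gt0 : (0 < t)%N.
Proof. by have := card2_exp_gt0 cardL; rewrite muln_gt0. Qed.

Definition Qfld (x : L) :=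
  \sum_(1 <= i < t) T (x ^+ (2 ^ i + 1)) + T1 (x ^+ (2 ^ t + 1)).

Lemma natr_Qfun (x : L) : (Qfun t x)%:R = Qfld x.
Proof.
have fix_t : (x ^+ (2 ^ t + 1)) ^+ (2 ^ t) = x ^+ (2 ^ t + 1).
  by rewrite -exprM mulnDl mul1n -expnD addnn -mul2n exprD fixL addn1 exprS.
rewrite /Qfun (natr_addb chL) -(trace_fld_bool chL fix_t); congr (_ + _).
rewrite (big_morph _ (natr_addb chL) (erefl : (false%:R : L) = 0)).
by apply: eq_bigr => i _; rewrite -trace_fld_bool_card2.
Qed.

Lemma trace_fld_exprSD m (p q : L) i :
  trace_fld m ((p + q) ^+ (2 ^ i + 1)) =
    trace_fld m (p ^+ (2 ^ i + 1)) + trace_fld m (q ^+ (2 ^ i + 1))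
    + trace_fld m (p ^+ (2 ^ i) * q) + trace_fld m (p * q ^+ (2 ^ i)).
Proof.
rewrite addn1 !exprSr (exprD_pchar2 chL) mulrDr !mulrDl !(trace_fldD chL).
by rewrite [q ^+ _ * p]mulrC; ring.
Qed.

Lemma trace_fld_mul_frob (p q : L) i : (i <= n)%N ->
  T (p ^+ (2 ^ i) * q) = T (p * q ^+ (2 ^ (n - i))).
Proof.
move=> le_in; rewrite -(trace_fld_frob i (fixL (p * q ^+ (2 ^ (n - i))))).
by rewrite exprMn -exprM -expnD subnK // fixL.
Qed.

(* The half-trace term of [Q] is what makes its polar form a full trace. *)
Lemma trace_fld_half (w : L) : T w = T1 w + T1 (w ^+ (2 ^ t)).
Proof.
rewrite /trace_fld mul2n -addnn big_split_ord /=.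
by congr (_ + _); apply: eq_bigr => i _; rewrite expnD exprM.
Qed.

Lemma sum_trace_mul_frob (p q : L) :
  \sum_(1 <= i < n) T (p * q ^+ (2 ^ i)) = T p * T q + T (p * q).
Proof.
have sum_frob : \sum_(1 <= i < n) q ^+ (2 ^ i) = T q + q.
  rewrite /trace_fld -(big_mkord xpredT (fun i => q ^+ (2 ^ i))) big_ltn; last first.
    by rewrite muln_gt0 card2_half_exp_gt0.
  by rewrite expn0 expr1 addrC addrA addrr_pchar2 // add0r.
rewrite -(trace_fld_sum chL) -mulr_sumr sum_frob mulrDr (trace_fldD chL) mulrC.
rewrite (@trace_fldZ _ _ (T q)) 1?mulrC // (trace_fld_bool_card2 cardL).
by case: (tr n q); rewrite ?expr1n ?expr0n.
Qed.

Lemma Qfld_polar (p q : L) :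
  Qfld (p + q) = Qfld p + Qfld q + T p * T q + T (p * q).
Proof.
have cross : \sum_(1 <= i < t) T (p ^+ (2 ^ i) * q)
    + \sum_(1 <= i < t) T (p * q ^+ (2 ^ i)) + T (p * q ^+ (2 ^ t))
    = T p * T q + T (p * q).
  rewrite -sum_trace_mul_frob (sum_nat_fold_middle _ card2_half_exp_gt0).
  have -> : \sum_(1 <= i < t) T (p ^+ (2 ^ i) * q)
           = \sum_(1 <= i < t) T (p * q ^+ (2 ^ (n - i))).
    by apply: eq_big_nat => i /andP [_ lt_it]; apply: trace_fld_mul_frob; lia.
  by rewrite [RHS]addrC addrA.
rewrite /Qfld trace_fld_exprSD.
rewrite (eq_big_nat _ _ (fun i _ => trace_fld_exprSD n p q i)) !big_split /=.
rewrite -[RHS]addrA -cross trace_fld_half exprMn -exprM -expnD addnn -mul2n fixL.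
by ring.
Qed.

Lemma Qfun_polar (p q : L) :
  Qfun t (p + q) = Qfun t p (+) Qfun t q (+) (tr n p && tr n q) (+) tr n (p * q).
Proof.
apply: (@natr_bool_inj L); rewrite natr_Qfun Qfld_polar.
rewrite (natr_addb chL (_ (+) _ (+) _)) (natr_addb chL (_ (+) _)).
rewrite (natr_addb chL (Qfun t p)).
by rewrite !natr_Qfun !(trace_fld_bool_card2 cardL) -natrM mulnb.
Qed.

Lemma Qfun0 : Qfun t (0 : L) = false.
Proof.
have := Qfun_polar 0 0.
by rewrite addr0 mulr0 (tr_card2_0 cardL) andbF !addbF; case: (Qfun t 0).
Qed.

(* The polar form of [Q] is [(p, q) |-> tr p tr q + tr (p q)], which at
   [p = 1] is [tr q] because [tr 1 = n%:R = 0]. *)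
Lemma Qfun_not_xor_additive : ~ xor_additive (Qfun t : L -> bool).
Proof.
move=> Q_add; have [q trq] := exists_tr_card2 cardL.
have tr1 : tr n (1 : L) = false.
  rewrite /tr /trace_fld (eq_bigr (fun _ => 1)) => [|i _]; last by rewrite expr1n.
  rewrite sumr_const card_ord -mulr_natr mul1r natrM (pcharf0 chL).
  by rewrite mul0r eq_sym oner_eq0.
have := Qfun_polar 1 q; rewrite Q_add tr1 mul1r trq.
by case: (Qfun t 1); case: (Qfun t q).
Qed.

End QuadraticForm.

Lemma exprNCi_addb (b1 b2 : bool) :
  (- 'i) ^+ (b1 (+) b2) = (- 'i) ^+ b1 * (- 'i) ^+ b2 * sgn (b1 && b2) :> algC.
Proof.
case: b1; case: b2; rewrite /sgn /= ?expr0 ?expr1 ?mulr1 ?mul1r //.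
by rewrite -expr2 sqrrN sqrCi mulN1r opprK.
Qed.

Lemma exprCi_bool (b : bool) : 'i ^+ b = (1 + 'i) / 2%:R + (1 - 'i) / 2%:R * sgn b :> algC.
Proof.
have ? : (2%:R : algC) != 0 by rewrite pnatr_eq0.
by case: b; rewrite /sgn /= ?expr0 ?expr1; field.
Qed.

Lemma norm_half_sgn (b1 b2 : bool) :
  `| (1 + 'i) / 2%:R * sgn b1 + (1 - 'i) / 2%:R * sgn b2 | = 1 :> algC.
Proof.
have ? : (2%:R : algC) != 0 by rewrite pnatr_eq0.
case: b1; case: b2; rewrite /sgn /= ?expr0 ?expr1.
- by rewrite (_ : _ + _ = -1) ?normrN ?normr1 //; field.
- by rewrite (_ : _ + _ = - 'i) ?normrN ?normCi //; field.
- by rewrite (_ : _ + _ = 'i) ?normCi //; field.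
- by rewrite (_ : _ + _ = 1) ?normr1 //; field.
Qed.

Section NegaCharacter.
Variables (L : finFieldType) (t : nat).
Local Notation n := (2 * t)%N.
Hypothesis cardL : #|L| = (2 ^ n)%N.
Variable a : 'I_n -> L.
Hypothesis a_self_dual : self_dual a.

Definition nega_char (z : L) : algC :=
  'i ^+ wt a z * sgn (Qfun t z) * (- 'i) ^+ tr n z.

(* The defect [sgn (tr (p q))] of [exprCi_wtD] and the defect
   [sgn (tr p && tr q)] of [exprNCi_addb] are both produced by [Qfun_polar]. *)
Lemma nega_charD (p q : L) : nega_char (p + q) = nega_char p * nega_char q.
Proof.
rewrite /nega_char (exprCi_wtD cardL a_self_dual) (Qfun_polar cardL) (tr_card2_addb cardL).
rewrite exprNCi_addb (sgn_addb (_ (+) _ (+) _)) (sgn_addb (_ (+) _)) (sgn_addb (Qfun t p)).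
move: (sgnK (tr n (p * q))) (sgnK (tr n p && tr n q)).
move: (sgn (tr n (p * q))) (sgn (_ && _)) => s1 s2 s1K s2K.
move: ('i ^+ _) ('i ^+ _) ((- 'i) ^+ _) ((- 'i) ^+ _) (sgn (Qfun t p)) (sgn (Qfun t q)).
by move=> w1 w2 e1 e2 q1 q2; rewrite -[RHS]mulr1 -s1K -[RHS]mulr1 -s2K; ring.
Qed.

Lemma nega_char_sqr (z : L) : nega_char z ^+ 2 = 1.
Proof.
rewrite /nega_char !exprMn [sgn _ ^+ 2]expr2 sgnK mulr1 !(exprAC _ _ 2) sqrrN sqrCi.
by rewrite (tr_odd_wt cardL a_self_dual) -signr_odd -exprD addnn -signr_odd odd_double.
Qed.

Definition nega_bit (z : L) := nega_char z == -1.

Lemma sgn_nega_bit (z : L) : sgn (nega_bit z) = nega_char z.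
Proof.
rewrite /nega_bit; case: eqP => [->//|neq1] /=.
by have /eqP := nega_char_sqr z; rewrite sqrf_eq1 => /orP [/eqP//|/eqP].
Qed.

Lemma xor_additive_nega_bit : xor_additive nega_bit.
Proof.
move=> x y; apply: (@signr_inj algC).
by rewrite -!/(sgn _) sgn_addb !sgn_nega_bit nega_charD.
Qed.

Lemma exprCi_wt_nega_bit (z : L) :
  'i ^+ wt a z = sgn (nega_bit z) * sgn (Qfun t z) * 'i ^+ tr n z.
Proof.
have niK : (- 'i) ^+ tr n z * 'i ^+ tr n z = 1 :> algC.
  by rewrite -exprMn mulNr -expr2 sqrCi opprK expr1n.
rewrite sgn_nega_bit /nega_char; move: (sgnK (Qfun t z)) niK.
move: ('i ^+ wt a z) (sgn (Qfun t z)) ((- 'i) ^+ tr n z) ('i ^+ tr n z) => w s e i sK niK.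
by rewrite -[LHS]mulr1 -sK -[LHS]mulr1 -niK; ring.
Qed.

End NegaCharacter.

Definition walsh_flat (V : finZmodType) (e : nat) (f : V -> bool) :=
  forall l : V -> bool, xor_additive l ->
    exists b, \sum_z sgn (f z (+) l z) = sgn b * 2 ^+ e.

Section FlatWalshSpectrum.
Variables (L : finFieldType) (t : nat).
Local Notation n := (2 * t)%N.
Hypothesis cardL : #|L| = (2 ^ n)%N.

Lemma xor_additive_tr_mull (mu : L) : xor_additive (fun z => tr n (mu * z)).
Proof. by move=> x y; rewrite mulrDr (tr_card2_addb cardL). Qed.

Lemma walsh_flat_bent (g : L -> bool) : walsh_flat t g -> bent n g.
Proof.
move=> g_flat mu; have [b ->] := g_flat _ (xor_additive_tr_mull mu).
by rewrite normrM normr_sign mul1r mulKn // ger0_norm // exprn_ge0 // ler0n.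
Qed.

Lemma walsh_flat_negabent (a : 'I_n -> L) (g : L -> bool) :
  self_dual a -> walsh_flat t (fun z => g z (+) Qfun t z) -> negabent a g.
Proof.
move=> a_self_dual gQ_flat mu; rewrite mulKn //.
pose l z := tr n (mu * z) (+) nega_bit a z.
have l_add : xor_additive l.
  move=> x y; rewrite /l xor_additive_tr_mull.
  by rewrite (xor_additive_nega_bit cardL a_self_dual) addbACA.
have l'_add : xor_additive (fun z => l z (+) tr n z).
  by move=> x y; rewrite l_add (tr_card2_addb cardL) addbACA.
have [b1 sum1] := gQ_flat _ l_add; have [b2 sum2] := gQ_flat _ l'_add.
rewrite (eq_bigr (fun z => (1 + 'i) / 2%:R * sgn (g z (+) Qfun t z (+) l z)
    + (1 - 'i) / 2%:R * sgn (g z (+) Qfun t z (+) (l z (+) tr n z)))); last first.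
  move=> z _; rewrite (exprCi_wt_nega_bit cardL a_self_dual) exprCi_bool /l !sgn_addb.
  by move: (sgn _) (sgn _) (sgn _) (sgn _) (sgn _) => s1 s2 s3 s4 s5; ring.
rewrite big_split /= -!mulr_sumr sum1 sum2 !mulrA -mulrDl normrM norm_half_sgn mul1r.
by rewrite ger0_norm // exprn_ge0 // ler0n.
Qed.

End FlatWalshSpectrum.

Section Transport.
Variables (K L : finFieldType) (t : nat).
Hypothesis cardK : #|K| = (2 ^ t)%N.
Variable phi : K * K -> L.
Hypothesis phi_add : forall x1 y1 x2 y2,
  phi (x1 + x2, y1 + y2) = phi (x1, y1) + phi (x2, y2).
Hypothesis phi_bij : bijective phi.

Lemma phi_split x y : phi (x, y) = phi (x, 0) + phi (0, y).
Proof. by rewrite -phi_add addr0 add0r. Qed.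

Lemma walsh_flat_maiorana_mcfarland (f : L -> bool) (sigma : K -> K) (l1 k : K -> bool) :
  injective sigma -> xor_additive l1 ->
  (forall x y, f (phi (x, y)) = tr t (x * sigma y) (+) l1 x (+) k y) -> walsh_flat t f.
Proof.
move=> sigma_inj l1_add f_mm l l_add.
have l1l_add : xor_additive (fun x => l1 x (+) l (phi (x, 0))).
  by move=> x x'; rewrite l1_add -[in (x + x', 0)](addr0 0) phi_add l_add addbACA.
have [b sum_b] :=
  maiorana_mcfarland_walsh cardK (fun y => k y (+) l (phi (0, y))) sigma_inj l1l_add.
exists b; rewrite (reindex phi (onW_bij _ phi_bij)) -natrX -cardK -sum_b.
apply: eq_bigr => -[x y] _ /=; rewrite f_mm phi_split l_add.
by case: (tr t _); case: (l1 x); case: (k y); case: (l _); case: (l _).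
Qed.

End Transport.

Section CompleteMappingConstruction.
Variables (t : nat) (K L : finFieldType).
Hypotheses (cardK : #|K| = (2 ^ t)%N) (cardL : #|L| = (2 ^ (2 * t))%N).
Variable phi : K * K -> L.
Hypothesis phi_add : forall x1 y1 x2 y2,
  phi (x1 + x2, y1 + y2) = phi (x1, y1) + phi (x2, y2).
Hypothesis phi_bij : bijective phi.
Variables (a1 a2 a3 a4 beta gamma : K) (c : bool).
Hypothesis HQ : forall x y : K,
  Qfun t (phi (x, y)) =
  Gfun t (a1 * x + a2) (a3 * y + a4) (+) tr t (beta * x) (+) tr t (gamma * y) (+) c.
Variables (pi h : {poly K}).
Hypothesis pi_complete : complete_mapping pi.
Variable g : L -> bool.
Hypothesis Hg : forall x y : K,
  let f := fun u v : K => tr t (u * pi.[v]) (+) tr t h.[v] in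
  g (phi (x, y)) =
    f (a1 * x + a2) (a3 * y + a4) (+) Gfun t (a1 * x + a2) (a3 * y + a4)
    (+) tr t (beta * x) (+) tr t (gamma * y) (+) c.

Local Notation trK := (tr_card2_addb cardK).

Lemma tr_affine_mul x z : tr t ((a1 * x + a2) * z) = tr t (x * (a1 * z)) (+) tr t (a2 * z).
Proof. by rewrite mulrDl trK mulrCA mulrA. Qed.

(* If [a1 a3 = 0], [G (a1 x + a2, a3 y + a4)] is affine in [(x, y)], hence so
   is [Q] by [HQ]; its constant term is [Q 0 = 0], so [Q] would be additive. *)
Lemma affine_coef_neq0 : a1 * a3 != 0.
Proof.
apply/eqP => a13; apply: (Qfun_not_xor_additive cardL).
have [phiV phiK phiVK] := phi_bij.
have Gaff x y : Gfun t (a1 * x + a2) (a3 * y + a4)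
    = tr t (x * (a1 * a4)) (+) tr t (y * (a2 * a3)) (+) tr t (a2 * a4).
  rewrite /Gfun tr_affine_mul mulrDr mulrA a13 mul0r add0r mulrDr trK.
  by rewrite [a2 * (a3 * y)]mulrA [_ * y]mulrC addbA.
have phi0 : phi (0, 0) = 0 by apply: (addrI (phi (0, 0))); rewrite -phi_add !addr0.
have c_eq : tr t (a2 * a4) = c.
  have := HQ 0 0; rewrite phi0 (Qfun0 cardL) Gaff !mul0r !mulr0 !(tr_card2_0 cardK).
  by case: (tr t _); case: c.
move=> u v; rewrite -(phiVK u) -(phiVK v); case: (phiV u) => x y; case: (phiV v) => x' y'.
rewrite -phi_add !HQ !Gaff !mulrDl !mulrDr !trK c_eq.
by do 8!case: (tr t _); case: c.
Qed.

Lemma affine_inj : injective (fun y : K => a3 * y + a4).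
Proof.
have a3_neq0 : a3 != 0 by apply: contraNneq affine_coef_neq0 => ->; rewrite mulr0.
by move=> y1 y2 /addIr /(mulfI a3_neq0).
Qed.

Lemma a1_neq0 : a1 != 0.
Proof. by apply: contraNneq affine_coef_neq0 => ->; rewrite mul0r. Qed.

Lemma g_maiorana_mcfarland x y (v := a3 * y + a4) :
  g (phi (x, y)) = tr t (x * (a1 * (pi.[v] + v))) (+) tr t (beta * x)
    (+) (tr t (a2 * (pi.[v] + v)) (+) tr t h.[v] (+) tr t (gamma * y) (+) c).
Proof.
rewrite /v Hg /Gfun; move: (a3 * y + a4) => w.
rewrite !tr_affine_mul !mulrDr !trK.
by do 7!case: (tr t _); case: c.
Qed.

Lemma gQ_maiorana_mcfarland x y (v := a3 * y + a4) :
  g (phi (x, y)) (+) Qfun t (phi (x, y))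
    = tr t (x * (a1 * pi.[v])) (+) false (+) (tr t (a2 * pi.[v]) (+) tr t h.[v]).
Proof.
rewrite /v Hg HQ /=; move: (a3 * y + a4) => w.
rewrite tr_affine_mul.
by case: (Gfun _ _ _); do 5!case: (tr t _); case: c.
Qed.

Lemma complete_mapping_bent_negabent (a : 'I_(2 * t) -> L) :
  self_dual a -> bent_negabent a g.
Proof.
have [pi_inj piD_inj] := pi_complete.
move=> a_self_dual; split.
  apply: (walsh_flat_bent cardL).
  apply: (walsh_flat_maiorana_mcfarland cardK phi_add phi_bij _ _ g_maiorana_mcfarland).
    by move=> y1 y2 /(mulfI a1_neq0) /piD_inj /affine_inj.
  by move=> x x'; rewrite mulrDr trK.
apply: (walsh_flat_negabent cardL a_self_dual).
apply: (walsh_flat_maiorana_mcfarland cardK phi_add phi_bij _ _ gQ_maiorana_mcfarland) => //.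
by move=> y1 y2 /(mulfI a1_neq0) /pi_inj /affine_inj.
Qed.

End CompleteMappingConstruction.

Theorem theorem8 (t : nat) (K L : finFieldType)
  (HK : #|K| = (2 ^ t)%N) (HL : #|L| = (2 ^ (2 * t))%N)
  (phi : K * K -> L)
  (phi_add : forall x1 y1 x2 y2,
      phi (x1 + x2, y1 + y2) = phi (x1, y1) + phi (x2, y2))
  (phi_bij : bijective phi)
  (a1 a2 a3 a4 beta gamma : K) (c : bool)
  (HQ : forall x y : K,
      Qfun t (phi (x, y)) =
      Gfun t (a1 * x + a2) (a3 * y + a4) (+) tr t (beta * x)
        (+) tr t (gamma * y) (+) c)
  (pi h : {poly K}) (Hpi : complete_mapping pi)
  (basis : 'I_(2 * t) -> L) (Hbasis : self_dual basis)
  (g : L -> bool)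
  (Hg : forall x y : K,
      let f := fun u v : K => tr t (u * pi.[v]) (+) tr t h.[v] in
      g (phi (x, y)) =
        f (a1 * x + a2) (a3 * y + a4) (+) Gfun t (a1 * x + a2) (a3 * y + a4)
        (+) tr t (beta * x) (+) tr t (gamma * y) (+) c) :
  bent_negabent basis g.
Proof.
exact: (@complete_mapping_bent_negabent t K L HK HL phi phi_add phi_bij
          a1 a2 a3 a4 beta gamma c HQ pi h Hpi g Hg basis Hbasis).
Qed.
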